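(* For all $N\in\mathbb Z_{\ge1}$, $m\in\mathbb Z$ and primitive $k$th roots of unity $\xi$, $$A_m(\xi,N)=\frac{(-1)^N\xi^{-m}}{N!}\sum_{u+v+j_1+\dots+j_N=N+m}B_v^{(m+1)}\beta_{j_1}(\xi)\beta_{j_2}(\xi^2)\cdots\beta_{j_N}(\xi^N)\frac{1^{j_1}2^{j_2}\cdots N^{j_N}}{u!\,v!\,j_1!\cdots j_N!},$$ the sum over all $u,v,j_1,\dots,j_N\in\mathbb Z_{\ge0}$ (an empty sum being $0$).
   Context: $(q)_N:=(1-q)\cdots(1-q^N)$ and $A_m(\xi,N)$ is the coefficient of $(q-\xi)^m$ in the Laurent expansion of $1/(q)_N$ about $q=\xi$. Nörlund polynomials: $(z/(e^z-1))^\alpha=\sum_n B_n^{(\alpha)}z^n/n!$. Apostol–Bernoulli numbers: $\frac{z}{\rho e^z-1}=\sum_{n\ge0}\beta_n(\rho)z^n/n!$ for $\rho\in\mathbb C$. *)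

(* Complex numbers are modelled by algC (algebraic closure
   of Q inside C); all quantities in the statement are algebraic. *)
From HB Require Import structures.
From mathcomp Require Import all_boot all_order all_algebra all_field.
Set Implicit Arguments. Unset Strict Implicit. Unset Printing Implicit Defensive.
Import Order.TTheory GRing.Theory Num.Theory.
Local Open Scope ring_scope.

Definition ps_one : nat -> algC := fun n => (n == 0)%:R.
Definition ps_mul (a b : nat -> algC) : nat -> algC :=
  fun n => \sum_(i < n.+1) a i * b (n - i)%N.
Definition ps_pow (a : nat -> algC) (k : nat) : nat -> algC :=
  iter k (ps_mul a) ps_one.

Fixpoint ps_inv_seq (a : nat -> algC) (n : nat) : seq algC :=
  match n with
  | 0 => [:: (a 0%N)^-1]
  | n'.+1 => let s := ps_inv_seq a n' in
      rcons s (- (a 0%N)^-1 * \sum_(i < n'.+1) a i.+1 * nth 0 s (n' - i)%N)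
  end.
Definition ps_inv (a : nat -> algC) : nat -> algC :=
  fun n => nth 0 (ps_inv_seq a n) n.

Definition ps_exp : nat -> algC := fun n => (n`!%:R)^-1.
Definition ps_expm1_div : nat -> algC := fun n => ((n.+1)`!%:R)^-1.

(* Coefficient of t^m (m : int) in the Laurent expansion at t = 0 of 1/p(t),
   for a nonzero polynomial p: write p = t^r Q with Q(0) <> 0
   (r = index of the first nonzero coefficient); then
   1/p = t^(-r) Q^(-1). *)
Definition laurent_inv_coef (p : {poly algC}) (m : int) : algC :=
  let r := find (fun c => c != 0) p in
  let Q := fun i => p`_(i + r) in
  match (m + r%:Z)%R with
  | Posz n => ps_inv Q n
  | Negz _ => 0
  end.

(* (q)_N = (1-q)...(1-q^N), written in the local variable t = q - xi. *)
Definition qpoch_shift (xi : algC) (N : nat) : {poly algC} :=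
  \prod_(1 <= j < N.+1) (1 - ('X + xi%:P) ^+ j).

Definition A_coef (m : int) (xi : algC) (N : nat) : algC :=
  laurent_inv_coef (qpoch_shift xi N) m.

(* Noerlund polynomials at integer alpha:
   (z/(e^z-1))^alpha = sum_n B_n^(alpha) z^n/n!.
   For alpha = n >= 0 this is 1/((e^z-1)/z)^n, for alpha = -(n+1) it is
   ((e^z-1)/z)^(n+1). *)
Definition norlund (alpha : int) (v : nat) : algC :=
  v`!%:R *
  (match alpha with
   | Posz n => ps_inv (ps_pow ps_expm1_div n)
   | Negz n => ps_pow ps_expm1_div n.+1
   end) v.

(* Apostol-Bernoulli numbers: z/(rho e^z - 1) = sum beta_n(rho) z^n/n!.
   If rho = 1 this is 1/((e^z-1)/z); otherwise rho e^z - 1 has nonzero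
   constant term rho - 1 and z/(rho e^z - 1) = z * (rho e^z - 1)^(-1). *)
Definition apostol (rho : algC) (n : nat) : algC :=
  n`!%:R *
  (if rho == 1 then ps_inv ps_expm1_div n
   else match n with
        | 0 => 0
        | n'.+1 => ps_inv (fun i => rho * ps_exp i - (i == 0)%:R) n'
        end).

(* The right-hand side sum over u, v, j_1..j_N >= 0 with
   u + v + j_1 + ... + j_N = N + m (empty, hence 0, if N + m < 0).
   j : 'I_N -> nat encodes j_(i+1) = j i. *)
Definition rhs_sum (N : nat) (m : int) (xi : algC) : algC :=
  match (N%:Z + m)%R with
  | Negz _ => 0
  | Posz s =>
    \sum_(u < s.+1) \sum_(v < s.+1)
      \sum_(j : {ffun 'I_N -> 'I_s.+1} | (u + v + \sum_(i < N) (j i : nat))%N == s)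
        norlund (m + 1) v
        * (\prod_(i < N) (apostol (xi ^+ i.+1) (j i)
                          * (i.+1)%:R ^+ (j i) / ((j i)`!)%:R))
        / (u`!%:R * v`!%:R)
  end.

From HB Require Import structures.
From mathcomp Require Import all_boot all_order all_algebra all_field.
From mathcomp Require Import ring zify.
Set Implicit Arguments. Unset Strict Implicit. Unset Printing Implicit Defensive.
Import Order.TTheory GRing.Theory Num.Theory.
Local Open Scope ring_scope.

(* Substitute q = xi e^z, i.e. t = q - xi = xi (e^z - 1). Then 1 - q^j = 1 - xi^j e^(jz),
   and (xi^j e^(jz) - 1) times the Apostol-Bernoulli series of xi^j at jz is jz, so
   (q)_N times the product of these series is (-1)^N N! z^N. Writing (q)_N = t^r Q(t)
   with Q(0) <> 0 and z/t = xi^-1 z/(e^z - 1), the right-hand side becomes a coefficient of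
   e^z (z/(e^z - 1))^(m+r+1) (1/Q)(xi (e^z - 1)), the Noerlund factor supplying
   (z/(e^z - 1))^(m+1). Lagrange inversion, [z^k] e^z (z/(e^z - 1))^(k+1) F(c (e^z - 1))
   = c^k [t^k] F(t), turns it into xi^(m+r) [t^(m+r)] 1/Q = xi^(m+r) A_m(xi, N).
   Power series are handled as polynomials modulo z^n for n large enough. *)

Definition eqXn {R : fieldType} (n : nat) (p q : {poly R}) := 'X^n %| p - q.

Notation "p = q %[modX n ]" := (eqXn n p q) : ring_scope.

Section CongruenceModXn.
Variable R : fieldType.
Implicit Types (p q r : {poly R}) (n : nat).

Lemma eqXnP n p q : p = q %[modX n] <-> forall i, (i < n)%N -> p`_i = q`_i.
Proof.
split=> [/dvdpP [d pq] i lt_in | eq_pq].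
  by apply/eqP; rewrite -subr_eq0 -coefB pq coefMXn lt_in.
have take0 : take_poly n (p - q) = 0.
  apply/polyP => i; rewrite coef_take_poly coef0 coefB.
  by case: ifP => // /eq_pq ->; rewrite subrr.
by rewrite /eqXn -(poly_take_drop n (p - q)) take0 add0r; exact: dvdp_mull.
Qed.

Lemma eqXn_coef n p q i : p = q %[modX n] -> (i < n)%N -> p`_i = q`_i.
Proof. by move/eqXnP; apply. Qed.

Lemma eqXn_refl n p : p = p %[modX n].
Proof. by rewrite /eqXn subrr dvdp0. Qed.

Lemma eqXn_sym n p q : p = q %[modX n] -> q = p %[modX n].
Proof. by rewrite /eqXn -opprB dvdpNr. Qed.

Lemma eqXn_trans n q p r : p = q %[modX n] -> q = r %[modX n] -> p = r %[modX n].
Proof. by rewrite /eqXn => /dvdp_add pq /pq; rewrite addrA subrK. Qed.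

Lemma eqXnD n p q p' q' :
  p = q %[modX n] -> p' = q' %[modX n] -> p + p' = q + q' %[modX n].
Proof. by rewrite /eqXn => /dvdp_add pq /pq; rewrite opprD addrACA. Qed.

Lemma eqXnN n p q : p = q %[modX n] -> - p = - q %[modX n].
Proof. by rewrite /eqXn -opprD dvdpNr. Qed.

Lemma eqXnB n p q p' q' :
  p = q %[modX n] -> p' = q' %[modX n] -> p - p' = q - q' %[modX n].
Proof. by move=> pq /eqXnN; apply: eqXnD. Qed.

Lemma eqXnMr n r p q : p = q %[modX n] -> p * r = q * r %[modX n].
Proof. by rewrite /eqXn -mulrBl; apply: dvdp_mulr. Qed.

Lemma eqXnM n p q p' q' :
  p = q %[modX n] -> p' = q' %[modX n] -> p * p' = q * q' %[modX n].
Proof.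
move=> /(eqXnMr p') pq /(eqXnMr q); rewrite ![_ * q]mulrC; exact: eqXn_trans.
Qed.

Lemma eqXnMl n r p q : p = q %[modX n] -> r * p = r * q %[modX n].
Proof. exact/eqXnM/eqXn_refl. Qed.

Lemma eqXnZ n (c : R) p q : p = q %[modX n] -> c *: p = c *: q %[modX n].
Proof. by rewrite -!mul_polyC; apply: eqXnMl. Qed.

Lemma eqXnX n k p q : p = q %[modX n] -> p ^+ k = q ^+ k %[modX n].
Proof.
by move=> pq; elim: k => [|k IHk]; rewrite ?eqXn_refl // !exprS eqXnM.
Qed.

Lemma eqXn_prod n (I : finType) (F G : I -> {poly R}) :
  (forall i, F i = G i %[modX n]) -> \prod_i F i = \prod_i G i %[modX n].
Proof.
by move=> FG; elim/big_rec2: _ => [|i a b _]; [apply: eqXn_refl | apply: eqXnM].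
Qed.

Lemma eqXn_comp n T p q :
  'X %| T -> p = q %[modX n] -> p \Po T = q \Po T %[modX n].
Proof.
move=> /dvdpP [e ->] /dvdpP [d pq]; rewrite /eqXn -linearB /= pq comp_polyM.
by rewrite rmorphXn /= comp_polyX exprMn mulrA dvdp_mull.
Qed.

Lemma eqXn_mulXn2l n k p q :
  (k <= n)%N -> 'X^k * p = 'X^k * q %[modX n] -> p = q %[modX n - k].
Proof.
move=> le_kn; rewrite /eqXn -mulrBr -{1}(subnKC le_kn) exprD.
by rewrite dvdp_mul2l // expf_neq0 // polyX_eq0.
Qed.

Lemma eqXn_deriv n p q : p = q %[modX n] -> p^`() = q^`() %[modX n.-1].
Proof.
move=> /eqXnP pq; apply/eqXnP => i lt_in; rewrite !coef_deriv pq //.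
by case: n lt_in {pq}.
Qed.

Lemma eqXn_inv_uniq n p q r :
  p * q = 1 %[modX n] -> p * r = 1 %[modX n] -> q = r %[modX n].
Proof.
move=> pq pr; apply: (eqXn_trans (q := q * (p * r))).
  by rewrite -{1}[q]mulr1; apply/eqXnMl/eqXn_sym.
by rewrite mulrA [q * p]mulrC -{2}[r]mul1r; apply: eqXnMr.
Qed.

End CongruenceModXn.

Definition ps_trunc (n : nat) (a : nat -> algC) : {poly algC} := \poly_(i < n) a i.

Section TruncatedSeries.
Implicit Types (a b : nat -> algC) (n : nat).

Lemma eq_ps_trunc n a b :
  (forall i, (i < n)%N -> a i = b i) -> ps_trunc n a = ps_trunc n b.
Proof. by move=> ab; apply/polyP => i; rewrite !coef_poly; case: ifP => // /ab. Qed.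

Lemma ps_trunc_leq m n a : (m <= n)%N -> ps_trunc n a = ps_trunc m a %[modX m].
Proof.
by move=> le_mn; apply/eqXnP => i lt_im; rewrite !coef_poly lt_im (leq_trans lt_im).
Qed.

Lemma ps_trunc_one n : ps_trunc n ps_one = 1 %[modX n].
Proof. by apply/eqXnP => i lt_in; rewrite coef_poly lt_in coef1. Qed.

Lemma ps_trunc_mul n a b : ps_trunc n (ps_mul a b) = ps_trunc n a * ps_trunc n b %[modX n].
Proof.
apply/eqXnP => i lt_in; rewrite coef_poly lt_in coefM; apply: eq_bigr => j _.
rewrite !coef_poly (leq_ltn_trans (leq_subr _ _) lt_in).
by rewrite (leq_ltn_trans _ lt_in) // -ltnS.
Qed.

Lemma ps_trunc_pow n a k : ps_trunc n (ps_pow a k) = ps_trunc n a ^+ k %[modX n].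
Proof.
elim: k => [|k IHk]; first exact: ps_trunc_one.
by rewrite exprS; apply: eqXn_trans (ps_trunc_mul _ _ _) (eqXnMl _ IHk).
Qed.

Lemma ps_pow_coef0 a k : ps_pow a k 0 = a 0%N ^+ k.
Proof. by elim: k => //= k IHk; rewrite exprS -IHk /ps_mul big_ord1. Qed.

Lemma size_ps_inv_seq a n : size (ps_inv_seq a n) = n.+1.
Proof. by elim: n => //= n IHn; rewrite size_rcons IHn. Qed.

Lemma nth_ps_inv_seq a n i : (i <= n)%N -> nth 0 (ps_inv_seq a n) i = ps_inv a i.
Proof.
elim: n => [|n IHn]; first by rewrite leqn0 => /eqP ->.
rewrite leq_eqVlt => /predU1P [-> //|lt_in].
by rewrite /= nth_rcons size_ps_inv_seq lt_in IHn.
Qed.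

Lemma ps_invS a n :
  ps_inv a n.+1 = - (a 0%N)^-1 * \sum_(i < n.+1) a i.+1 * ps_inv a (n - i).
Proof.
rewrite /ps_inv /= nth_rcons size_ps_inv_seq ltnn eqxx.
by congr (_ * _); apply: eq_bigr => i _; rewrite nth_ps_inv_seq // leq_subr.
Qed.

Lemma ps_mulV a n : a 0%N != 0 -> ps_mul a (ps_inv a) n = ps_one n.
Proof.
move=> a0; case: n => [|n]; rewrite /ps_mul /ps_one; first by rewrite big_ord1 divff.
rewrite big_ord_recl /= subn0 ps_invS mulrA mulrN divff // mulN1r addrC.
by apply/eqP; rewrite subr_eq0; apply/eqP/eq_bigr => i _; rewrite subSS.
Qed.

Lemma ps_trunc_inv n a :
  a 0%N != 0 -> ps_trunc n a * ps_trunc n (ps_inv a) = 1 %[modX n].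
Proof.
move=> a0; apply: eqXn_trans (eqXn_sym (ps_trunc_mul _ _ _)) _.
by rewrite (eq_ps_trunc (b := ps_one)) ?ps_trunc_one // => i _; apply: ps_mulV.
Qed.

End TruncatedSeries.

Definition exp_poly n := ps_trunc n ps_exp.
Definition expm1_div_poly n := ps_trunc n ps_expm1_div.
Definition bern_poly n := ps_trunc n (ps_inv ps_expm1_div).

Lemma natr_fact_neq0 n : n`!%:R != 0 :> algC.
Proof. by rewrite pnatr_eq0 -lt0n fact_gt0. Qed.

Section ExpBernoulli.
Variable n : nat.
Local Notation e := (exp_poly n).
Local Notation phi := (expm1_div_poly n).
Local Notation psi := (bern_poly n).

Lemma expm1_div_bern : phi * psi = 1 %[modX n].
Proof. by apply: ps_trunc_inv; rewrite invr_eq0 natr_fact_neq0. Qed.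

Lemma X_expm1_div : 'X * phi = e - 1 %[modX n].
Proof.
apply/eqXnP => i lt_in; rewrite coefXM coefB coef1 !coef_poly lt_in.
case: i lt_in => [|i] lt_in /=; first by rewrite /ps_exp invr1 subrr.
by rewrite (ltn_trans (ltnSn i) lt_in) subr0.
Qed.

Lemma deriv_exp_poly : e^`() = e %[modX n.-1].
Proof.
apply/eqXnP => i lt_in; rewrite coef_deriv !coef_poly.
have lt_i1n : (i.+1 < n)%N by case: n lt_in.
rewrite lt_i1n (ltn_trans (ltnSn i) lt_i1n) /ps_exp factS natrM invfM.
by rewrite -[_ *+ i.+1]mulr_natr mulrAC mulVf ?mul1r // pnatr_eq0.
Qed.

Lemma deriv_bern_poly : 'X * psi^`() = psi - psi ^+ 2 * e %[modX n.-1].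
Proof.
have inv1 : 'X^(n.-1) %| 1 - phi * psi.
  apply: dvdp_trans (dvdp_exp2l 'X (leq_pred n)) _.
  by rewrite -dvdpNr opprB; exact: expm1_div_bern.
have inv1_deriv : 'X^(n.-1) %| phi^`() * psi + phi * psi^`().
  by have := eqXn_deriv (expm1_div_bern); rewrite /eqXn -polyC1 derivC subr0 derivM.
have X_phi_deriv : 'X^(n.-1) %| e - phi - 'X * phi^`().
  have -> : e - phi - 'X * phi^`() = e - e^`() + (e - 1 - 'X * phi)^`() by rewrite !derivE; ring.
  apply: dvdp_add; first by rewrite -dvdpNr opprB; exact: deriv_exp_poly.
  by rewrite derivB; exact: (eqXn_deriv (eqXn_sym X_expm1_div)).
rewrite /eqXn; have -> : 'X * psi^`() - (psi - psi ^+ 2 * e) = 'X * psi^`() * (1 - phi * psi)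
    + 'X * psi * (phi^`() * psi + phi * psi^`()) + psi ^+ 2 * (e - phi - 'X * phi^`())
    - psi * (1 - phi * psi) by ring.
by rewrite dvdp_sub ?dvdp_add ?dvdp_mull.
Qed.

End ExpBernoulli.

Lemma bern_coef0 : ps_inv ps_expm1_div 0 = 1.
Proof. by rewrite /ps_inv /= /ps_expm1_div invrK. Qed.

(* Comparing the coefficients of z^j in z (psi^j)' = j (psi^j - e psi^(j+1)) gives
   (e psi^(j+1))_j = 0 for j > 0, the residue computation behind Lagrange inversion. *)
Lemma coef_exp_bern_pow n j :
  (j < n.-1)%N -> (exp_poly n * bern_poly n ^+ j.+1)`_j = (j == 0)%:R.
Proof.
case: j => [|j] lt_jn.
  have n_gt0 : (0 < n)%N by case: n lt_jn.
  by rewrite coef0M expr1 !coef_poly n_gt0 bern_coef0 /ps_exp invr1 mulr1.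
have dpow : 'X * (bern_poly n ^+ j.+1)^`()
    = (bern_poly n ^+ j.+1 - exp_poly n * bern_poly n ^+ j.+2) *+ j.+1 %[modX n.-1].
  rewrite deriv_exp /= -mulrnAr mulrA.
  have -> : bern_poly n ^+ j.+1 - exp_poly n * bern_poly n ^+ j.+2
      = (bern_poly n - bern_poly n ^+ 2 * exp_poly n) * bern_poly n ^+ j by rewrite !exprS; ring.
  rewrite -mulrnAl mulrnAr mulrnAl -[(_ * _) *+ _]mulr_natr -[((_ - _) * _) *+ _]mulr_natr.
  exact/eqXnMr/eqXnMr/deriv_bern_poly.
move: (eqXn_coef dpow lt_jn); rewrite coefXM /= coef_deriv coefMn coefB => /eqP.
by rewrite -subr_eq0 -mulrnBl opprB addrC subrK mulrn_eq0 /= => /eqP.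
Qed.

Lemma coef_exp_bern_expm1 n k i : (i <= k)%N -> (k < n.-1)%N ->
  (exp_poly n * bern_poly n ^+ k.+1 * expm1_div_poly n ^+ i)`_(k - i) = (k == i)%:R.
Proof.
move=> le_ik lt_kn; have lt_kin : (k - i < n.-1)%N by apply: leq_ltn_trans (leq_subr _ _) lt_kn.
have -> : (k == i) = (k - i == 0)%N by rewrite subn_eq0 eqn_leq le_ik andbT.
rewrite -(coef_exp_bern_pow lt_kin); apply: (eqXn_coef (n := n)).
  have -> : k.+1 = ((k - i).+1 + i)%N by rewrite addSn subnK.
  rewrite exprD -!mulrA -exprMn mulrA -[X in _ = X %[modX n]]mulr1.
  by apply/eqXnMl; rewrite -(expr1n _ i); apply/eqXnX; rewrite mulrC; apply: expm1_div_bern.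
exact: leq_trans lt_kin (leq_pred n).
Qed.

Lemma coef_lagrange n (B : {poly algC}) (c : algC) k : (k < n.-1)%N ->
  (exp_poly n * bern_poly n ^+ k.+1 * (B \Po (c%:P * ('X * expm1_div_poly n))))`_k
    = c ^+ k * B`_k.
Proof.
move=> lt_kn; rewrite comp_polyE mulr_sumr coef_sum.
rewrite (eq_bigr (fun i : 'I_(size B) => if (i : nat) == k then c ^+ i * B`_i else 0)).
  rewrite -big_mkcond (big_ord1_eq _ (fun j => c ^+ j * B`_j)).
  by case: ltnP => // le_Bk; rewrite nth_default // mulr0.
move=> i _; rewrite -scalerAr coefZ !exprMn -rmorphXn.
rewrite (mulrCA _ (c ^+ i)%:P) coefCM mulrCA coefXnM.
case: ltnP => [lt_ki|le_ik]; first by rewrite eq_sym (ltn_eqF lt_ki) !mulr0.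
by rewrite coef_exp_bern_expm1 // eq_sym; case: eqP; rewrite ?mulr1 ?mulr0 // mulrC.
Qed.

Lemma coef_comp_scaleX (R : comNzRingType) (p : {poly R}) (c : R) k :
  (p \Po (c *: 'X))`_k = c ^+ k * p`_k.
Proof.
rewrite coef_comp_poly (eq_bigr (fun i : 'I_(size p) =>
    if (i : nat) == k then c ^+ i * p`_i else 0)); last first.
  by move=> i _; rewrite exprZn coefZ coefXn eq_sym; case: eqP; rewrite ?mulr1 ?mulr0 // mulrC.
rewrite -big_mkcond (big_ord1_eq _ (fun j => c ^+ j * p`_j)).
by case: ltnP => // le_pk; rewrite nth_default // mulr0.
Qed.

Lemma ps_trunc_comp_scaleX n (a : nat -> algC) (c : algC) :
  ps_trunc n a \Po (c *: 'X) = ps_trunc n (fun k => c ^+ k * a k).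
Proof. by apply/polyP => k; rewrite coef_comp_scaleX !coef_poly; case: ifP; rewrite ?mulr0. Qed.

Lemma ps_mul_exp_scale (c : algC) j :
  ps_mul (fun k => c ^+ k * ps_exp k) ps_exp j = (c + 1) ^+ j * ps_exp j.
Proof.
rewrite /ps_mul addrC exprDn mulr_suml; apply: eq_bigr => k _.
have le_kj : (k <= j)%N by rewrite -ltnS.
rewrite expr1n mul1r -mulr_natr /ps_exp -(bin_fact le_kj) !natrM.
by field; rewrite !natr_fact_neq0 pnatr_eq0 -lt0n bin_gt0 le_kj.
Qed.

Lemma exp_poly_pow n i : exp_poly n ^+ i = exp_poly n \Po (i%:R *: 'X) %[modX n].
Proof.
rewrite ps_trunc_comp_scaleX; elim: i => [|i IHi].
  apply/eqXnP => k lt_kn; rewrite coef1 coef_poly lt_kn expr0n.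
  by case: k {lt_kn} => [|k] /=; rewrite ?mul0r // mul1r /ps_exp invr1.
rewrite exprSr; apply: eqXn_trans (eqXnMr _ IHi) _.
apply: eqXn_trans (eqXn_sym (ps_trunc_mul _ _ _)) _.
rewrite (eq_ps_trunc (b := fun k => i.+1%:R ^+ k * ps_exp k)) ?eqXn_refl // => k _.
by rewrite ps_mul_exp_scale -natr1.
Qed.

Definition apostol_poly n (rho : algC) := ps_trunc n (fun k => apostol rho k / k`!%:R).

Lemma apostol_poly_gf n rho : (rho *: exp_poly n - 1) * apostol_poly n rho = 'X %[modX n].
Proof.
rewrite /apostol_poly /apostol; case: eqP => [->|rho_neq1].
  rewrite scale1r (eq_ps_trunc (b := ps_inv ps_expm1_div)); last first.
    by move=> k _; rewrite mulrC mulrA mulVf ?mul1r // natr_fact_neq0.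
  apply: eqXn_trans (eqXnMr _ (eqXn_sym (X_expm1_div n))) _.
  by rewrite -mulrA -[X in _ = X %[modX n]]mulr1; apply/eqXnMl/expm1_div_bern.
pose g k := rho * ps_exp k - (k == 0)%:R.
have gE : rho *: exp_poly n - 1 = ps_trunc n g %[modX n].
  by apply/eqXnP => k lt_kn; rewrite coefB coefZ coef1 !coef_poly lt_kn.
have hE : ps_trunc n (fun k => k`!%:R * (if k is k'.+1 then ps_inv g k' else 0) / k`!%:R)
    = 'X * ps_trunc n (ps_inv g) %[modX n].
  apply/eqXnP => k lt_kn; rewrite coefXM !coef_poly lt_kn.
  case: k lt_kn => [|k] lt_kn /=; first by rewrite mulr0 mul0r.
  by rewrite (ltn_trans (ltnSn k) lt_kn) mulrC mulrA mulVf ?mul1r // natr_fact_neq0.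
apply: eqXn_trans (eqXnM gE hE) _.
rewrite mulrCA -[X in _ = X %[modX n]]mulr1; apply: eqXnMl; apply: ps_trunc_inv.
by rewrite /g /ps_exp /= invr1 mulr1 subr_eq0; apply/eqP.
Qed.

Lemma apostol_poly_dil n rho (i : nat) :
  (rho *: exp_poly n ^+ i - 1) * (apostol_poly n rho \Po (i%:R *: 'X)) = i%:R *: 'X %[modX n].
Proof.
have expE : rho *: exp_poly n ^+ i - 1 = (rho *: exp_poly n - 1) \Po (i%:R *: 'X) %[modX n].
  rewrite linearB /= linearZ /= -polyC1 comp_polyC polyC1.
  exact/eqXnB/eqXn_refl/eqXnZ/exp_poly_pow.
apply: eqXn_trans (eqXnMr _ expE) _.
rewrite -comp_polyM -{2}(comp_polyX (i%:R *: 'X)).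
by apply: eqXn_comp (apostol_poly_gf n rho); rewrite -mul_polyC dvdp_mull.
Qed.

(* The change of variables q = xi e^z, i.e. t = q - xi = xi z (e^z - 1)/z. *)
Definition qexp_shift n (xi : algC) := xi%:P * ('X * expm1_div_poly n).

Definition apostol_prod n (xi : algC) N :=
  \prod_(i < N) (apostol_poly n (xi ^+ i.+1) \Po (i.+1%:R *: 'X)).

Lemma X_dvd_qexp_shift n xi : 'X %| qexp_shift n xi.
Proof. by rewrite /qexp_shift mulrCA dvdp_mulr. Qed.

Lemma horner_qexp_shift0 n xi : (qexp_shift n xi).[0] = 0.
Proof. by rewrite /qexp_shift horner_coef0 coefCM coefXM mulr0. Qed.

Lemma qpoch_shift_comp n xi N : qpoch_shift xi N \Po qexp_shift n xi
  = \prod_(i < N) (1 - xi ^+ i.+1 *: exp_poly n ^+ i.+1) %[modX n].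
Proof.
rewrite /qpoch_shift big_add1 /= big_mkord rmorph_prod; apply: eqXn_prod => i.
rewrite rmorphB rmorph1 rmorphXn /= -exprZn; apply: eqXnB (eqXn_refl _ _) (eqXnX _ _).
rewrite comp_polyD comp_polyX comp_polyC /qexp_shift.
have -> : xi *: exp_poly n = xi%:P * (exp_poly n - 1) + xi%:P.
  by rewrite mulrBr mulr1 subrK mul_polyC.
exact: eqXnD (eqXnMl _ (X_expm1_div n)) (eqXn_refl _ _).
Qed.

Lemma qpoch_apostol_prod n xi N :
  (qpoch_shift xi N \Po qexp_shift n xi) * apostol_prod n xi N
    = ((-1) ^+ N * N`!%:R) *: 'X^N %[modX n].
Proof.
apply: eqXn_trans (eqXnMr _ (qpoch_shift_comp n xi N)) _.
have -> : \prod_(i < N) (1 - xi ^+ i.+1 *: exp_poly n ^+ i.+1)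
    = (-1) ^+ N * \prod_(i < N) (xi ^+ i.+1 *: exp_poly n ^+ i.+1 - 1).
  by rewrite -[in (-1) ^+ N](card_ord N) -prodrN; apply: eq_bigr => i _; rewrite opprB.
have signC : (-1) ^+ N = ((-1) ^+ N)%:P :> {poly algC} by rewrite rmorphXn rmorphN1.
rewrite /apostol_prod -mulrA -big_split /= -scalerA signC mul_polyC; apply: eqXnZ.
apply: eqXn_trans (eqXn_prod (fun i : 'I_N => apostol_poly_dil n (xi ^+ i.+1) i.+1)) _.
rewrite scaler_prod prodr_const card_ord fact_prod natr_prod big_add1 big_mkord.
exact: eqXn_refl.
Qed.

Definition qpoch_order (xi : algC) N := find (fun c => c != 0) (qpoch_shift xi N).

Definition qpoch_unit (xi : algC) N := fun i => (qpoch_shift xi N)`_(i + qpoch_order xi N).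

Definition qpoch_unit_inv n (xi : algC) N := ps_trunc n (ps_inv (qpoch_unit xi N)).

Lemma A_coefE m xi N : A_coef m xi N =
  if (m + (qpoch_order xi N)%:Z)%R is Posz k then ps_inv (qpoch_unit xi N) k else 0.
Proof. by []. Qed.

Section QPochhammerOrder.
Variables (xi : algC) (N : nat).
Local Notation P := (qpoch_shift xi N).
Local Notation r := (qpoch_order xi N).

Lemma qpoch_shift_neq0 : P != 0.
Proof.
rewrite prodf_seq_neq0; apply/allP => j; rewrite mem_index_iota => /andP [j_gt0 _].
apply/implyP => _; apply/eqP => /eqP; rewrite subr_eq0 eq_sym => /eqP pow1.
have := size_exp ('X + xi%:P) j; rewrite pow1 size_poly1 size_XaddC mul1n => j0.
by rewrite -j0 in j_gt0.
Qed.

Lemma has_qpoch_shift : has (fun c => c != 0) P.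
Proof.
apply/hasP; exists (lead_coef P); last by rewrite lead_coef_eq0 qpoch_shift_neq0.
by apply: mem_nth; rewrite prednK // size_poly_gt0 qpoch_shift_neq0.
Qed.

Lemma qpoch_unit0_neq0 : qpoch_unit xi N 0 != 0.
Proof. by rewrite /qpoch_unit add0n; apply: (nth_find 0 has_qpoch_shift). Qed.

Lemma qpoch_shift_split : P = 'X^r * drop_poly r P.
Proof.
rewrite -{1}(poly_take_drop r P) mulrC; have -> : take_poly r P = 0; last by rewrite add0r.
apply/polyP => i; rewrite coef_take_poly coef0; case: ifP => // lt_ir.
by apply/eqP/negbFE/(before_find 0 lt_ir).
Qed.

End QPochhammerOrder.

Section QPochhammerApostol.
Variables (xi : algC) (N : nat).
Local Notation r := (qpoch_order xi N).
Local Notation c := ((-1) ^+ N * N`!%:R : algC).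

Lemma qpoch_unit_mulV n : (drop_poly r (qpoch_shift xi N) \Po qexp_shift n xi)
  * (qpoch_unit_inv n xi N \Po qexp_shift n xi) = 1 %[modX n].
Proof.
rewrite -comp_polyM -[1](comp_polyC 1 (qexp_shift n xi)) polyC1.
apply: eqXn_comp (X_dvd_qexp_shift n xi) _.
apply: eqXn_trans (ps_trunc_inv n (qpoch_unit0_neq0 xi N)); apply: eqXnMr.
by apply/eqXnP => i lt_in; rewrite coef_drop_poly coef_poly lt_in.
Qed.

Lemma qpoch_apostol_bern n : xi ^+ r *: ('X^r * apostol_prod n xi N)
  = c *: ('X^N * (bern_poly n ^+ r * (qpoch_unit_inv n xi N \Po qexp_shift n xi))) %[modX n].
Proof.
set T := qexp_shift n xi; set B := qpoch_unit_inv n xi N.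
pose U := drop_poly r (qpoch_shift xi N).
have := eqXnMr (bern_poly n ^+ r * (B \Po T)) (qpoch_apostol_prod n xi N).
rewrite -scalerAl; apply: eqXn_trans.
rewrite {1}qpoch_shift_split comp_polyM comp_Xn_poly -/U.
have -> : (qexp_shift n xi) ^+ r * (U \Po T) * apostol_prod n xi N * (bern_poly n ^+ r * (B \Po T))
    = (xi ^+ r *: ('X^r * apostol_prod n xi N))
      * ((expm1_div_poly n * bern_poly n) ^+ r * ((U \Po T) * (B \Po T))).
  by rewrite /qexp_shift -!mul_polyC rmorphXn /= !exprMn; ring.
rewrite -[X in X = _ %[modX n]]mulr1; apply/eqXnMl/eqXn_sym.
rewrite -[1 in X in _ = X %[modX n]](mulr1 1); apply: eqXnM (qpoch_unit_mulV n).
by rewrite -(expr1n _ r); apply/eqXnX/expm1_div_bern.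
Qed.

Lemma qpoch_order_leq : (r <= N)%N.
Proof.
rewrite leqNgt; apply/negP => lt_Nr.
have := eqXn_coef (qpoch_apostol_bern N.+1) (ltnSn N).
rewrite !coefZ coefXnM lt_Nr mulr0 coefXnM ltnn subnn coef0M -!horner_coef0.
rewrite horner_exp horner_comp horner_qexp_shift0 !horner_coef0 !coef_poly /=.
rewrite bern_coef0 expr1n mul1r => /esym/eqP.
rewrite !mulf_eq0 invr_eq0 (negbTE (qpoch_unit0_neq0 xi N)) signr_eq0.
by rewrite (negbTE (natr_fact_neq0 N)).
Qed.

Lemma apostol_prod_qpoch n : xi != 0 -> (r <= n)%N ->
  apostol_prod n xi N = ((xi ^+ r)^-1 * c) *: ('X^(N - r)
    * (bern_poly n ^+ r * (qpoch_unit_inv n xi N \Po qexp_shift n xi))) %[modX n - r].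
Proof.
move=> xi_neq0 le_rn; set Z := _ * (_ \Po _).
have XnE : 'X^N = 'X^r * 'X^(N - r) :> {poly algC} by rewrite -exprD subnKC // qpoch_order_leq.
have := qpoch_apostol_bern n; rewrite -/Z XnE -mulrA.
rewrite scalerAr [c *: _]scalerAr => /(eqXn_mulXn2l le_rn) cong.
rewrite -scalerA -[apostol_prod n xi N](scalerK (expf_neq0 r xi_neq0)).
exact: eqXnZ.
Qed.

End QPochhammerApostol.

Definition norlund_poly n (m : int) := ps_trunc n (fun v => norlund (m + 1) v / v`!%:R).

Lemma apostol_prodE n xi N : apostol_prod n xi N
  = \prod_(i < N) ps_trunc n (fun k => apostol (xi ^+ i.+1) k * i.+1%:R ^+ k / k`!%:R).
Proof.
apply: eq_bigr => i _; rewrite ps_trunc_comp_scaleX; apply: eq_ps_trunc => k _.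
by rewrite mulrCA mulrA.
Qed.

Lemma coef_mul_sum3 (R : comNzRingType) (I : finType) n1 n2 (a b : nat -> R)
    (c : I -> R) (d : I -> nat) k :
  ((\sum_(u < n1) a u *: 'X^u) * (\sum_(v < n2) b v *: 'X^v) * (\sum_i c i *: 'X^(d i)))`_k
   = \sum_(u < n1) \sum_(v < n2) \sum_i a u * b v * c i * ((u + v + d i)%N == k)%:R.
Proof.
rewrite -mulrA big_distrl /= coef_sum; apply: eq_bigr => u _.
rewrite big_distrl /= big_distrr /= coef_sum; apply: eq_bigr => v _.
rewrite big_distrr /= big_distrr /= coef_sum; apply: eq_bigr => i _.
have -> : a u *: 'X^u * (b v *: 'X^v * (c i *: 'X^(d i)))
    = (a u * b v * c i) *: 'X^(u + v + d i) :> {poly R}.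
  by rewrite !exprD -!mul_polyC !rmorphM /=; ring.
by rewrite coefZ coefXn eq_sym.
Qed.

Lemma rhs_sumE N (m : int) xi (s : nat) : N%:Z + m = s ->
  rhs_sum N m xi = (exp_poly s.+1 * norlund_poly s.+1 m * apostol_prod s.+1 xi N)`_s.
Proof.
move=> sE; rewrite /rhs_sum sE apostol_prodE /exp_poly /norlund_poly /ps_trunc !poly_def.
under [X in _ * X]eq_bigr do rewrite poly_def.
rewrite bigA_distr_bigA /=.
under [X in _ * X]eq_bigr do rewrite scaler_prod prodrXr.
rewrite (coef_mul_sum3 _ _ ps_exp (fun v => norlund (m + 1) v / v`!%:R)
  (fun f : {ffun 'I_N -> 'I_s.+1} =>
     \prod_(i < N) (apostol (xi ^+ i.+1) (f i) * i.+1%:R ^+ (f i) / (f i)`!%:R))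
  (fun f : {ffun 'I_N -> 'I_s.+1} => \sum_(i < N) (f i : nat))).
apply: eq_bigr => u _; apply: eq_bigr => v _.
rewrite big_mkcond /=; apply: eq_bigr => f _.
case: eqP => _; last by rewrite mulr0.
by rewrite mulr1 /ps_exp invfM; ring.
Qed.

Lemma norlund_bern_pow n (m : int) r k : m + r%:Z = k%:Z ->
  norlund_poly n m * bern_poly n ^+ r = bern_poly n ^+ k.+1 %[modX n].
Proof.
have inv_phi_pow a : bern_poly n ^+ a * expm1_div_poly n ^+ a = 1 %[modX n].
  by rewrite -exprMn -(expr1n _ a); apply: eqXnX; rewrite mulrC expm1_div_bern.
move=> mrE; rewrite /norlund_poly /norlund.
case m1E: (m + 1) => [a|a].
  have -> : k.+1 = (a + r)%N by lia.
  rewrite exprD; apply: eqXnMr; apply: (eqXn_inv_uniq (p := ps_trunc n (ps_pow ps_expm1_div a))).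
    rewrite [X in _ * X](eq_ps_trunc (b := ps_inv (ps_pow ps_expm1_div a))).
      by apply: ps_trunc_inv; rewrite ps_pow_coef0 expf_neq0 // invr_eq0 natr_fact_neq0.
    by move=> v _; rewrite mulrC mulrA mulVf ?mul1r // natr_fact_neq0.
  apply: eqXn_trans (eqXnMr _ (ps_trunc_pow _ _ _)) _.
  by rewrite mulrC; apply: inv_phi_pow.
rewrite (eq_ps_trunc (b := ps_pow ps_expm1_div a.+1)); last first.
  by move=> v _; rewrite mulrC mulrA mulVf ?mul1r // natr_fact_neq0.
have -> : r = (k.+1 + a.+1)%N by lia.
rewrite exprD mulrCA -[X in _ = X %[modX n]]mulr1; apply: eqXnMl.
apply: eqXn_trans (eqXnMr _ (ps_trunc_pow _ _ _)) _.
by rewrite mulrC; apply: inv_phi_pow.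
Qed.

Lemma coef_exp_norlund_apostol_leq N m xi s n : (s < n)%N ->
  (exp_poly s.+1 * norlund_poly s.+1 m * apostol_prod s.+1 xi N)`_s
    = (exp_poly n * norlund_poly n m * apostol_prod n xi N)`_s.
Proof.
move=> lt_sn; apply/esym/(eqXn_coef (n := s.+1)) => //.
apply: eqXnM; first by apply: eqXnM; apply: ps_trunc_leq.
apply: eqXn_prod => i; apply: eqXn_comp (ps_trunc_leq _ lt_sn).
by rewrite -mul_polyC dvdp_mull.
Qed.

Section CoefficientComparison.
Variables (N : nat) (m : int) (xi : algC) (s n : nat).
Hypotheses (xi_neq0 : xi != 0) (sE : N%:Z + m = s) (lt_sNn : (s + N < n.-1)%N).
Local Notation r := (qpoch_order xi N).
Local Notation c := ((-1) ^+ N * N`!%:R : algC).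

Lemma coef_exp_norlund_apostol :
  (exp_poly n * norlund_poly n m * apostol_prod n xi N)`_s = (xi ^+ r)^-1 * c
    * (if m + r%:Z is Posz k then xi ^+ k * ps_inv (qpoch_unit xi N) k else 0).
Proof.
have le_rN := qpoch_order_leq xi N.
set Z := bern_poly n ^+ r * (qpoch_unit_inv n xi N \Po qexp_shift n xi).
have -> : (exp_poly n * norlund_poly n m * apostol_prod n xi N)`_s
    = (xi ^+ r)^-1 * c * ('X^(N - r) * (exp_poly n * norlund_poly n m * Z))`_s.
  rewrite -coefZ; apply: (eqXn_coef (n := n - r)); last by lia.
  have -> : (xi ^+ r)^-1 * c *: ('X^(N - r) * (exp_poly n * norlund_poly n m * Z))
      = exp_poly n * norlund_poly n m * ((xi ^+ r)^-1 * c *: ('X^(N - r) * Z)).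
    by rewrite -!mul_polyC; ring.
  by apply/eqXnMl/apostol_prod_qpoch => //; lia.
rewrite coefXnM; case mrE: (m + r%:Z) => [k|k]; last by rewrite ifT ?mulr0 //; lia.
rewrite ifF; last by apply/negbTE; rewrite -leqNgt; lia.
have -> : (s - (N - r) = k)%N by lia.
have -> : (exp_poly n * norlund_poly n m * Z)`_k
    = (exp_poly n * bern_poly n ^+ k.+1 * (qpoch_unit_inv n xi N \Po qexp_shift n xi))`_k.
  apply: (eqXn_coef (n := n)); last by lia.
  by rewrite /Z mulrA -(mulrA (exp_poly n)); apply/eqXnMr/eqXnMl/norlund_bern_pow.
rewrite coef_lagrange; last by lia.
by rewrite coef_poly ifT //; lia.
Qed.

End CoefficientComparison.

Theorem proposition5p1 (N : nat) (m : int) (k : nat) (xi : algC) :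
  (1 <= N)%N -> k.-primitive_root xi ->
  A_coef m xi N = (-1) ^+ N * xi ^ (- m) / (N`!)%:R * rhs_sum N m xi.
Proof.
move=> _ prim_xi; have xi_neq0 : xi != 0.
  apply/eqP => xi0; have := prim_expr_order prim_xi.
  by rewrite xi0 expr0n gtn_eqF ?(prim_order_gt0 prim_xi) // => /esym/eqP; rewrite oner_eq0.
have le_rN := qpoch_order_leq xi N; rewrite A_coefE.
case sE: (N%:Z + m) => [s|s]; last first.
  by rewrite /rhs_sum sE mulr0; case mrE: (m + _)%R => [j|//]; lia.
rewrite (rhs_sumE xi sE) (coef_exp_norlund_apostol_leq _ _ _ (n := (s + N).+2)); last by lia.
rewrite (coef_exp_norlund_apostol xi_neq0 sE) //.
case mrE: (m + _)%R => [j|j]; last by rewrite !mulr0.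
have -> : xi ^ (- m) = xi ^+ qpoch_order xi N / xi ^+ j.
  have -> : - m = (qpoch_order xi N)%:Z - j%:Z by lia.
  by rewrite exprzDr ?unitfE // -exprnN -exprnP.
have sign2 : (-1) ^+ N * (-1) ^+ N = 1 :> algC by rewrite -exprMn mulrN1 opprK expr1n.
by field: sign2; rewrite !expf_neq0 // natr_fact_neq0.
Qed.
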